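(* Let $A$ and $B=\{b_1,\ldots,b_m\}$ be finite point sets in $\mathbb{R}^2$ with $m\le|A|$, let $t\in\mathbb{R}^2$, and let $\mathcal{L}=\{L_t(b_i)\mid i=1,\ldots,m\}$ be the preference lists at $t$. Let $a_1,\ldots,a_m$ be $m$ distinct points of $A$, and suppose that for some $0\le j\le m-1$: (a) $L_t(b_i)$ starts with $(a_1,a_2,\ldots,a_j)$ for $i=1,\ldots,j$; (b) $L_t(b_{j+1})$ starts with $a_{j+1}$; (c) $L_t(b_i)$ starts with $(a_{j+2},\ldots,a_m)$ for $i=j+2,\ldots,m$. Then every efficient matching for $\mathcal{L}$ matches $B$ onto $\{a_1,\ldots,a_m\}$.
   Context: The preference list $L_t(b)$ of $b\in B$ is the list of all points of $A$ sorted by increasing distance from $b+t$ (a strict ordering, ties broken in some fixed way). A matching is an injective map $\pi:B\to A$. A matching $\pi$ is better than a distinct matching $\sigma$ if for each $b\in B$ either $\pi(b)=\sigma(b)$ or $\pi(b)$ appears before $\sigma(b)$ in $L_t(b)$. A matching is efficient if no matching is better than it. *)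

From mathcomp Require Import all_boot all_order all_algebra.
From mathcomp Require Import reals.
Set Implicit Arguments. Unset Strict Implicit. Unset Printing Implicit Defensive.
Import Order.TTheory GRing.Theory Num.Theory.
Local Open Scope ring_scope.

Definition point (R : realType) := (R * R)%type.

Definition padd (R : realType) (p q : point R) : point R := (p.1 + q.1, p.2 + q.2).

Definition dist (R : realType) (p q : point R) : R :=
  Num.sqrt ((p.1 - q.1) ^+ 2 + (p.2 - q.2) ^+ 2).

(* L is a preference list L_t(b) of b with respect to the finite point set A
   (given as a duplicate-free sequence): it lists every point of A exactly once,
   sorted by increasing distance from b + t (ties broken in some way). *)
Definition is_pref_list (R : realType) (A : seq (point R)) (t b : point R)
    (L : seq (point R)) : Prop :=
  perm_eq L A /\ sorted (fun x y => dist x (padd b t) <= dist y (padd b t)) L.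

Definition is_matching (R : realType) (A B : seq (point R))
    (pi : point R -> point R) : Prop :=
  {in B, forall x, pi x \in A} /\ {in B &, injective pi}.

Definition better (R : realType) (B : seq (point R))
    (L : point R -> seq (point R)) (pi sigma : point R -> point R) : Prop :=
  (exists2 x, x \in B & pi x != sigma x) /\
  {in B, forall x, pi x = sigma x \/ (index (pi x) (L x) < index (sigma x) (L x))%N}.

Definition efficient (R : realType) (A B : seq (point R))
    (L : point R -> seq (point R)) (pi : point R -> point R) : Prop :=
  is_matching A B pi /\
  ~ (exists sigma, is_matching A B sigma /\ better B L sigma pi).

From mathcomp Require Import all_boot all_order all_algebra.
From mathcomp Require Import reals zify.
Import Order.TTheory GRing.Theory Num.Theory.
Local Open Scope ring_scope.

(* An efficient matching never leaves a point of A unmatched while some b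
   prefers it to its own partner: reassigning b to that point would be better.
   So if the lists of k points of B all start with the same k' <= k points and
   one of those were unmatched, the k partners would all lie among the other
   k' - 1 points, contradicting injectivity.  Conditions (a), (b), (c) give such
   common prefixes covering a_1, ..., a_m, hence these m points are exactly the
   image of B. *)

Section EfficientMatching.
Variables (R : realType) (A B : seq (point R)) (L : point R -> seq (point R)).
Variable pi : point R -> point R.
Hypothesis pi_eff : efficient A B L pi.

Lemma efficient_index_le_unmatched {b x} :
  b \in B -> x \in A -> x \notin map pi B ->
  (index (pi b) (L b) <= index x (L b))%N.
Proof.
case: pi_eff => [[piA piI] no_better] bB xA xn; rewrite leqNgt; apply/negP => lt.
have pi_neq_x y : y \in B -> pi y != x.
  by move=> yB; apply: contraNneq xn => <-; exact: map_f.
apply: no_better; exists (fun y => if y == b then x else pi y); split; [split|split].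
- by move=> y yB; case: eqP => // _; apply: piA.
- move=> y z yB zB /=; case: (y =P b) => [->|_]; case: (z =P b) => [->|_] //.
  + by move=> E; move: (pi_neq_x z zB); rewrite E eqxx.
  + by move=> E; move: (pi_neq_x y yB); rewrite E eqxx.
  + exact: piI.
- by exists b => //=; rewrite eqxx eq_sym pi_neq_x.
- by move=> y yB /=; case: (y =P b) => [->|_]; [right|left].
Qed.

Lemma efficient_prefix_mem {b p x} :
  b \in B -> prefix p (L b) -> x \in p -> x \in A -> x \notin map pi B ->
  pi b \in p.
Proof.
move=> bB /prefixP [s Lb] xp xA xn; apply: contraT => pi_b_p.
have := efficient_index_le_unmatched bB xA xn.
by rewrite Lb !index_cat xp (negbTE pi_b_p) leqNgt ltn_addr // index_mem.
Qed.

Lemma efficient_matches_common_prefix C p :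
  uniq C -> {subset C <= B} -> uniq p -> {subset p <= A} ->
  (size p <= size C)%N -> {in C, forall b, prefix p (L b)} ->
  {subset p <= map pi B}.
Proof.
case: pi_eff => [[_ piI] _] uC CB up pA size_pC pre x xp; apply: contraT => xn.
have uniq_piC : uniq (map pi C).
  by rewrite map_inj_in_uniq // => y z yC zC; apply: piI; apply: CB.
have piC_sub : {subset map pi C <= rem x p}.
  move=> _ /mapP [b bC ->]; rewrite (mem_rem_uniq _ up) !inE.
  rewrite (efficient_prefix_mem (CB _ bC) (pre _ bC) xp (pA _ xp) xn) andbT.
  by apply: contraNneq xn => <-; rewrite map_f ?CB.
have p_gt0 : (0 < size p)%N by case: (p) xp.
have := uniq_leq_size uniq_piC piC_sub.
rewrite size_rem // size_map -ltnS prednK //.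
by move=> /leq_trans/(_ size_pC); rewrite ltnn.
Qed.

Lemma efficient_matches_segment (a : seq (point R)) lo n :
  uniq B -> uniq a -> {subset a <= A} -> size a = size B -> (lo + n <= size B)%N ->
  (forall i, (lo <= i < lo + n)%N ->
     prefix (take n (drop lo a)) (L (nth (0, 0) B i))) ->
  {subset take n (drop lo a) <= map pi B}.
Proof.
move=> uB ua aA size_a seg pre.
have size_seg s : size s = size B -> size (take n (drop lo s)) = n.
  by move=> size_s; rewrite size_take size_drop size_s; case: ltnP; lia.
apply: (efficient_matches_common_prefix (take n (drop lo B))).
- by rewrite take_uniq // drop_uniq.
- by move=> b /mem_take /mem_drop.
- by rewrite take_uniq // drop_uniq.
- by move=> x /mem_take /mem_drop /aA.
- by rewrite !size_seg.
- move=> b bC; rewrite -(nth_index (0, 0) bC).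
  have : (index b (take n (drop lo B)) < n)%N.
    by rewrite -[X in (_ < X)%N](size_seg _ B) // index_mem.
  move: (index _ _) => i ilt; rewrite nth_take // nth_drop.
  by apply: pre; rewrite leq_addr ltn_add2l.
Qed.

End EfficientMatching.

Theorem lemma7 (R : realType) (A B : seq (point R)) (t : point R)
    (L : point R -> seq (point R)) (a : seq (point R)) (j : nat) :
  uniq A -> uniq B -> (size B <= size A)%N ->
  {in B, forall b, is_pref_list A t b (L b)} ->
  uniq a -> size a = size B -> {subset a <= A} ->
  (j < size B)%N ->
  (* (a) L_t(b_i) starts with (a_1, ..., a_j) for i = 1..j *)
  (forall i, (i < j)%N -> prefix (take j a) (L (nth (0, 0) B i))) ->
  (* (b) L_t(b_{j+1}) starts with a_{j+1} *)
  prefix [:: nth (0, 0) a j] (L (nth (0, 0) B j)) ->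
  (* (c) L_t(b_i) starts with (a_{j+2}, ..., a_m) for i = j+2..m *)
  (forall i, (j < i < size B)%N -> prefix (drop j.+1 a) (L (nth (0, 0) B i))) ->
  forall pi : point R -> point R, efficient A B L pi ->
    [seq pi b | b <- B] =i a.
Proof.
move=> _ uB _ _ ua size_a aA jB Ha Hb Hc pi eff.
have segment lo n :=
  @efficient_matches_segment R A B L pi eff a lo n uB ua aA size_a.
have a_j : take 1 (drop j a) = [:: nth (0, 0) a j].
  by rewrite (drop_nth (0, 0)) ?size_a //= take0.
have a_gt_j : take (size B - j.+1) (drop j.+1 a) = drop j.+1 a.
  by rewrite take_oversize // size_drop size_a.
have a_matched : {subset a <= map pi B}.
  rewrite -(cat_take_drop j a) -(cat_take_drop 1 (drop j a)) drop_drop add1n => x.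
  rewrite !mem_cat => /or3P [].
  - rewrite -{1}[a]drop0; apply: segment; first exact: ltnW.
    by move=> i; rewrite add0n drop0 => /andP [_ /Ha].
  - apply: segment; first by rewrite addn1.
    by move=> i; rewrite addn1 -eqn_leq => /eqP <-; rewrite a_j.
  - rewrite -a_gt_j; apply: segment; first by rewrite subnKC.
    by move=> i /andP [ji]; rewrite subnKC // a_gt_j => iB; apply: Hc; rewrite ji.
have size_piB : (size (map pi B) <= size a)%N by rewrite size_map size_a.
have [_ a_eq] := uniq_min_size ua a_matched size_piB.
by move=> y; rewrite a_eq.
Qed.
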